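(* Let $V:\mathbb{R}^n\times\mathbb{R}^{p,q}\to\mathbb{R}$ be a generalized discrete-time control Lyapunov function (g-dclf) of order $m$ for the control system $x^{k+1}=f(x^k,u^k)$, with associated function $\alpha$ and weights $\sigma_1,\dots,\sigma_m$. Then for any $(x^0,\mathbf{u}_{[0:q-1]})\in\mathbb{R}^n\times\mathbf{U}_{[0:q-1]}(x^0)$ there exists a control sequence $\boldsymbol{\nu}_{[0:q+m-1]}$, steering $x^0$ to states $x^1,\dots,x^m$ via $x^{j+1}=f(x^j,\nu_j)$, such that $$V(x^l,\boldsymbol{\nu}_{[l:q+l-1]})-V(x^0,\mathbf{u}_{[0:q-1]})\le-\alpha(x^0,\mathbf{u}_{[0:q-1]})$$ holds for some $l\in\{1,\dots,m\}$ with $\boldsymbol{\nu}_{[l:q+l-1]}\in\mathbf{U}_{[0:q-1]}(x^l)$.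
   Context: System: $x^{k+1}=f(x^k,u^k)$, $k\in\mathbb{N}$, with state constraint set $X\subseteq\mathbb{R}^n$, input constraint set $U\subseteq\mathbb{R}^p$, $0\in\operatorname{int}X$, $0\in\operatorname{int}U$, $f:X\times U\to\mathbb{R}^n$ continuous, $f(0,0)=0$. For a sequence $\mathbf{u}=[u_0,\dots,u_{N-1}]\in\mathbb{R}^{p,N}$, $\mathbf{u}_{[i:j]}$ denotes the subsequence $[u_i,\dots,u_j]$. Set of feasible controls: for $x\in X$, $\mathbf{U}_{[0:N-1]}(x)$ is the set of $\mathbf{u}_{[0:N-1]}\in\mathbb{R}^{p,N}$ such that, with $x^0=x$, $u_j\in U$ and $x^{j+1}=f(x^j,u_j)\in X$ for $j=0,\dots,N-1$. Norms of pairs $(x,\mathbf{u})$ are Euclidean norms of $[x^T,\mathrm{vec}(\mathbf{u})^T]$; positive definite means zero exactly at the origin and positive elsewhere; radially unbounded means $\to\infty$ as the norm $\to\infty$. g-dclf of order $m$ ($m\ge1$, $q\in\mathbb{N}$): a continuous positive definite $V:\mathbb{R}^n\times\mathbb{R}^{p,q}\to\mathbb{R}$ such that there are weights $\sigma_1,\dots,\sigma_m\ge0$ with $\frac{\sigma_1+\dots+\sigma_m}{m}-1\ge0$ and: if $q=0$ ($V$ depends only on $x$): (i) there is a continuous, radially unbounded, positive definite $\alpha:\mathbb{R}^n\to\mathbb{R}$ with $V(x^0)\ge\alpha(x^0)$ for all $x^0$; (ii) for every $x^0$ there is $\boldsymbol{\nu}_{[0:m-1]}\in\mathbf{U}_{[0:m-1]}(x^0)$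 steering $x^0$ to $x^1,\dots,x^m$ with $\frac{1}{m}\sum_{i=1}^m\sigma_iV(x^i)-V(x^0)\le-\alpha(x^0)$. If $q\neq0$: (i') there is a continuous, radially unbounded, positive definite $\alpha:\mathbb{R}^n\times\mathbb{R}^{p,q}\to\mathbb{R}$ with $V(x^0,\mathbf{u}_{[0:q-1]})\ge\alpha(x^0,\mathbf{u}_{[0:q-1]})$ for all $(x^0,\mathbf{u}_{[0:q-1]})\in\mathbb{R}^n\times\mathbf{U}_{[0:q-1]}(x^0)$; (ii') for every such $(x^0,\mathbf{u}_{[0:q-1]})$ there is $\boldsymbol{\nu}_{[0:q+m-1]}\in\mathbb{R}^{p,q+m}$ with $\boldsymbol{\nu}_{[l:q+l-1]}\in\mathbf{U}_{[0:q-1]}(x^l)$ for each $l\in\{0,\dots,m\}$, steering $x^0$ to $x^1,\dots,x^m$ (via $x^{j+1}=f(x^j,\nu_j)$), with $\frac{1}{m}\sum_{i=1}^m\sigma_iV(x^i,\boldsymbol{\nu}_{[i:q+i-1]})-V(x^0,\mathbf{u}_{[0:q-1]})\le-\alpha(x^0,\mathbf{u}_{[0:q-1]})$. (For $q=0$ read the pair $(x,\mathbf{u})$ as just $x$.) *)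

From HB Require Import structures.
From mathcomp Require Import all_boot all_order all_algebra.
From mathcomp Require Import all_classical all_reals all_analysis.
Set Implicit Arguments. Unset Strict Implicit. Unset Printing Implicit Defensive.
Import Order.TTheory GRing.Theory Num.Theory.
Import numFieldNormedType.Exports.
Local Open Scope classical_set_scope.
Local Open Scope ring_scope.

(* States are column vectors x : 'cV[R]_n, inputs u_j : 'cV[R]_p, and a
   control sequence u = [u_0,...,u_{N-1}] in R^{p,N} is a matrix
   'M[R]_(p, N) whose j-th column is u_j. *)

Section Defs.
Variable R : realType.
Variables n p : nat.

(* j-th column of a control sequence (0 if j is out of range; never used
   out of range in the statements below). *)
Definition ucol N (u : 'M[R]_(p, N)) (j : nat) : 'cV[R]_p :=
  match insub j with Some j' => col j' u | None => 0 end.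

Definition window N (u : 'M[R]_(p, N)) (l k : nat) : 'M[R]_(p, k) :=
  \matrix_(i < p, j < k) ucol u (l + j) i ord0.

Fixpoint traj (f : 'cV[R]_n -> 'cV[R]_p -> 'cV[R]_n) N
    (x : 'cV[R]_n) (u : 'M[R]_(p, N)) (j : nat) : 'cV[R]_n :=
  match j with
  | 0 => x
  | j'.+1 => f (traj f x u j') (ucol u j')
  end.

Definition feasible (f : 'cV[R]_n -> 'cV[R]_p -> 'cV[R]_n)
    (X : set 'cV[R]_n) (U : set 'cV[R]_p) N (x : 'cV[R]_n)
    (u : 'M[R]_(p, N)) : Prop :=
  forall j : nat, (j < N)%N -> U (ucol u j) /\ X (traj f x u j.+1).

Definition pairnorm q (x : 'cV[R]_n) (u : 'M[R]_(p, q)) : R :=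
  Num.sqrt (\sum_(i < n) x i ord0 ^+ 2 + \sum_(i < p) \sum_(j < q) u i j ^+ 2).

Definition pos_def q (W : 'cV[R]_n -> 'M[R]_(p, q) -> R) : Prop :=
  (forall x u, (x == 0) && (u == 0) -> W x u = 0) /\
  (forall x u, ~~ ((x == 0) && (u == 0)) -> 0 < W x u).

Definition radially_unbounded q (W : 'cV[R]_n -> 'M[R]_(p, q) -> R) : Prop :=
  forall M : R, exists r : R, forall x u, r < pairnorm x u -> M < W x u.

Definition cont2 q (W : 'cV[R]_n -> 'M[R]_(p, q) -> R) : Prop :=
  continuous (fun z : 'cV[R]_n * 'M[R]_(p, q) => W z.1 z.2).

Definition system_ok (f : 'cV[R]_n -> 'cV[R]_p -> 'cV[R]_n)
    (X : set 'cV[R]_n) (U : set 'cV[R]_p) : Prop :=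
  [/\ interior X 0, interior U 0,
      {within X `*` U, continuous (fun z : 'cV[R]_n * 'cV[R]_p => f z.1 z.2)}
    & f 0 0 = 0].

(* V is a g-dclf of order m (with parameter q), with associated function
   alpha and weights sigma_1..sigma_m (sigma indexed from 1). *)
Definition gdclf (f : 'cV[R]_n -> 'cV[R]_p -> 'cV[R]_n)
    (X : set 'cV[R]_n) (U : set 'cV[R]_p) (m q : nat)
    (V alpha : 'cV[R]_n -> 'M[R]_(p, q) -> R) (sigma : nat -> R) : Prop :=
  [/\ (1 <= m)%N, cont2 V /\ pos_def V,
      (forall i, (1 <= i <= m)%N -> 0 <= sigma i) /\
      (\sum_(1 <= i < m.+1) sigma i) / m%:R - 1 >= 0,
      (cont2 alpha /\ radially_unbounded alpha /\ pos_def alpha) /\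
      (forall x0 u, feasible f X U x0 u -> alpha x0 u <= V x0 u)
    &
      (forall x0 (u : 'M[R]_(p, q)), feasible f X U x0 u ->
        exists nu : 'M[R]_(p, q + m),
          ((q = 0)%N -> feasible f X U x0 nu) /\
          ((q <> 0)%N -> forall l, (l <= m)%N ->
              feasible f X U (traj f x0 nu l) (window nu l q)) /\
          (m%:R)^-1 * (\sum_(1 <= i < m.+1)
              sigma i * V (traj f x0 nu i) (window nu i q)) - V x0 u
            <= - alpha x0 u)].

End Defs.

From HB Require Import structures.
From mathcomp Require Import all_boot all_order all_algebra.
From mathcomp Require Import all_classical all_reals all_analysis.
Set Implicit Arguments. Unset Strict Implicit. Unset Printing Implicit Defensive.
Import Order.TTheory GRing.Theory Num.Theory.
Local Open Scope classical_set_scope.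
Local Open Scope ring_scope.

(* If every V(x^l, nu_[l:q+l-1]) exceeded a := V(x^0, u) - alpha(x^0, u), which
   is nonnegative by (i'), then, the weights being nonnegative with total at
   least m, the weighted mean (1/m) sum_i sigma_i V(x^i, nu_[i:q+i-1]) would
   exceed a as well, contradicting the decrease condition (ii'). *)

Lemma has_le_of_weighted_sum (R : realDomainType) (I : eqType) (r : seq I)
    (sigma w : I -> R) (a : R) :
  {in r, forall i, 0 <= sigma i} ->
  0 < \sum_(i <- r) sigma i ->
  \sum_(i <- r) sigma i * w i <= (\sum_(i <- r) sigma i) * a ->
  exists2 i, i \in r & w i <= a.
Proof.
move=> sigma_ge0 sum_gt0 sum_le.
have [/hasP [i ri wia] | /hasPn w_gt] := boolP (has (fun i => w i <= a) r).
  by exists i.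
have term_ge0 i : i \in r -> 0 <= sigma i * (w i - a).
  by move=> ri; rewrite mulr_ge0 ?sigma_ge0 // subr_ge0 ltW // ltNge w_gt.
have [i ri sigma_gt0] : exists2 i, i \in r & 0 < sigma i.
  move: sum_gt0; rewrite big_seq lt_def psumr_neq0 //.
  by case/andP => /hasP [i ri /andP [_ sigma_gt0]] _; exists i.
have : 0 < \sum_(i <- r) sigma i * (w i - a).
  rewrite big_seq lt_def psumr_neq0 // sumr_ge0 // andbT.
  by apply/hasP; exists i; rewrite // ri mulr_gt0 // subr_gt0 ltNge w_gt.
under eq_bigr do rewrite mulrBr.
by rewrite sumrB -mulr_suml subr_gt0 ltNge sum_le.
Qed.

Lemma has_le_of_weighted_mean (R : realFieldType) (I : eqType) (r : seq I)
    (sigma w : I -> R) (c a : R) :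
  0 < c -> 0 <= a -> {in r, forall i, 0 <= sigma i} ->
  c <= \sum_(i <- r) sigma i ->
  c^-1 * \sum_(i <- r) sigma i * w i <= a ->
  exists2 i, i \in r & w i <= a.
Proof.
move=> c_gt0 a_ge0 sigma_ge0 c_le mean_le.
apply: (has_le_of_weighted_sum sigma_ge0); first exact: lt_le_trans c_le.
apply: le_trans (ler_wpM2r a_ge0 c_le).
by rewrite -ler_pdivrMl.
Qed.

Lemma feasible_width0 (R : realType) (n p N : nat)
    (f : 'cV[R]_n -> 'cV[R]_p -> 'cV[R]_n) (X : set 'cV[R]_n)
    (U : set 'cV[R]_p) (x : 'cV[R]_n) (u : 'M[R]_(p, N)) :
  N = 0%N -> feasible f X U x u.
Proof. by move=> N0 j; rewrite [in (j < N)%N]N0. Qed.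

Theorem proposition3p1 (R : realType) (n p m q : nat)
    (f : 'cV[R]_n -> 'cV[R]_p -> 'cV[R]_n)
    (X : set 'cV[R]_n) (U : set 'cV[R]_p)
    (V alpha : 'cV[R]_n -> 'M[R]_(p, q) -> R) (sigma : nat -> R) :
  system_ok f X U ->
  gdclf f X U m V alpha sigma ->
  forall (x0 : 'cV[R]_n) (u : 'M[R]_(p, q)), feasible f X U x0 u ->
  exists nu : 'M[R]_(p, q + m), exists l : nat,
    [/\ (1 <= l <= m)%N,
        feasible f X U (traj f x0 nu l) (window nu l q)
      & V (traj f x0 nu l) (window nu l q) - V x0 u <= - alpha x0 u].
Proof.
move=> _ [m_gt0 _ [sigma_ge0 mean_sigma] [_ alpha_le_V] decrease] x0 u u_feas.
have [nu [_ [windows_feas V_mean_le]]] := decrease x0 u u_feas.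
have m_pos : 0 < m%:R :> R by rewrite ltr0n.
have [l] : exists2 l, l \in index_iota 1 m.+1 &
    V (traj f x0 nu l) (window nu l q) <= V x0 u - alpha x0 u.
  apply: (has_le_of_weighted_mean (sigma := sigma) m_pos).
  - by rewrite subr_ge0 alpha_le_V.
  - by move=> i; rewrite mem_index_iota; apply: sigma_ge0.
  - by move: mean_sigma; rewrite subr_ge0 ler_pdivlMr // mul1r.
  - by move: V_mean_le; rewrite lerBlDr addrC.
rewrite mem_index_iota ltnS => l_range V_le.
exists nu, l; split => //; last by rewrite lerBlDr addrC.
have [q0 | /eqP q_neq0] := eqVneq q 0%N; first exact: feasible_width0.
by apply: windows_feas => //; case/andP: l_range.
Qed.
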